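(* Let $H$ be a real Hilbert space, $(T_n)_{n\in\mathbb{N}}$ a family of self-mappings of $H$ and $(\gamma_n)$ a sequence of positive reals. Then $(T_n)$ is jointly $(P_2)$ with respect to $(\gamma_n)$ if and only if $(T_n)$ is jointly firmly nonexpansive with respect to $(\gamma_n)$.
   Context: $(T_n)$ is jointly firmly nonexpansive w.r.t. $(\gamma_n)$ if for all $n,m\in\mathbb{N}$, $x,y\in H$, $\alpha,\beta\in[0,1]$ with $(1-\alpha)\gamma_n=(1-\beta)\gamma_m$: $\|T_nx-T_my\|\le\|((1-\alpha)x+\alpha T_nx)-((1-\beta)y+\beta T_my)\|$. $(T_n)$ is jointly $(P_2)$ w.r.t. $(\gamma_n)$ if for all $n,m$ and $x,y\in H$: $\frac1{\gamma_m}\big(\|T_nx-T_my\|^2+\|y-T_my\|^2-\|y-T_nx\|^2\big)\le\frac1{\gamma_n}\big(\|x-T_my\|^2-\|x-T_nx\|^2-\|T_nx-T_my\|^2\big)$. *)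

From HB Require Import structures.
From mathcomp Require Import all_boot all_order all_algebra.
From mathcomp Require Import all_classical all_reals all_analysis.
Set Implicit Arguments. Unset Strict Implicit. Unset Printing Implicit Defensive.
Import Order.TTheory GRing.Theory Num.Theory.
Import numFieldNormedType.Exports.
Local Open Scope ring_scope.

(* A real Hilbert space: a complete normed module H over R whose norm is
   induced by an inner product ip (symmetric, bilinear, <x,x> = ||x||^2). *)
Definition is_inner_product (R : realType) (H : completeNormedModType R)
  (ip : H -> H -> R) : Prop :=
  [/\ (forall x y, ip x y = ip y x),
      (forall a x y z, ip (a *: x + y) z = a * ip x z + ip y z)
    & (forall x, ip x x = `|x| ^+ 2)].

Definition jointly_firmly_nonexpansive (R : realType) (H : normedModType R)
  (T : nat -> H -> H) (gamma : nat -> R) : Prop :=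
  forall (n m : nat) (x y : H) (alpha beta : R),
    0 <= alpha <= 1 -> 0 <= beta <= 1 ->
    (1 - alpha) * gamma n = (1 - beta) * gamma m ->
    `|T n x - T m y| <=
      `|((1 - alpha) *: x + alpha *: T n x) - ((1 - beta) *: y + beta *: T m y)|.

Definition jointly_P2 (R : realType) (H : normedModType R)
  (T : nat -> H -> H) (gamma : nat -> R) : Prop :=
  forall (n m : nat) (x y : H),
    (gamma m)^-1 * (`|T n x - T m y| ^+ 2 + `|y - T m y| ^+ 2 - `|y - T n x| ^+ 2)
    <= (gamma n)^-1 * (`|x - T m y| ^+ 2 - `|x - T n x| ^+ 2 - `|T n x - T m y| ^+ 2).

(** With u = T_n x, v = T_m y and w = (x - u)/γ_n - (y - v)/γ_m, polarization
   shows that (P_2) at (n, m, x, y) says exactly <u - v, w> >= 0.  On the other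
   side, writing c = (1 - α)γ_n = (1 - β)γ_m, the two averaged points differ by
   (u - v) + c w, and c ranges over [0, min(γ_n, γ_m)].  Since
   |u - v + c w|^2 = |u - v|^2 + 2c<u - v, w> + c^2|w|^2, the norm stays at
   least |u - v| for all small c > 0 exactly when <u - v, w> >= 0. *)

From HB Require Import structures.
From mathcomp Require Import all_boot all_order all_algebra.
From mathcomp Require Import all_classical all_reals all_analysis.
From mathcomp Require Import ring lra.
Import Order.TTheory GRing.Theory Num.Theory.
Import numFieldNormedType.Exports.
Local Open Scope ring_scope.

Lemma convex_combE (R : pzRingType) (V : lmodType R) (a : R) (x u : V) :
  (1 - a) *: x + a *: u = u + (1 - a) *: (x - u).
Proof.
by rewrite scalerBr [(1 - a) *: u]scalerBl scale1r opprB addrCA [u + _]addrC subrK.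
Qed.

Lemma averaged_diffE {R : fieldType} {V : lmodType R} {g h c a b : R}
    (x y u v : V) :
  g != 0 -> h != 0 -> (1 - a) * g = c -> (1 - b) * h = c ->
  ((1 - a) *: x + a *: u) - ((1 - b) *: y + b *: v)
  = (u - v) + c *: (g^-1 *: (x - u) - h^-1 *: (y - v)).
Proof.
move=> g0 h0 ac bc; rewrite !convex_combE.
have -> : 1 - a = c / g by rewrite -ac mulfK.
have -> : 1 - b = c / h by rewrite -bc mulfK.
by rewrite [in RHS]scalerBr !scalerA opprD addrACA.
Qed.

Section InnerProduct.
Context {R : realType} {H : completeNormedModType R} {ip : H -> H -> R}.
Hypothesis hip : is_inner_product ip.

Lemma ipC x y : ip x y = ip y x. Proof. by case: hip. Qed.

Lemma ipxx x : ip x x = `|x| ^+ 2. Proof. by case: hip. Qed.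

Lemma ipDZl a x y z : ip (a *: x + y) z = a * ip x z + ip y z.
Proof. by case: hip => _ + _; apply. Qed.

Lemma ipZl a x z : ip (a *: x) z = a * ip x z.
Proof.
have ip0l : ip 0 z = 0.
  by have := ipDZl 1 0 0 z; rewrite scaler0 addr0 mul1r; lra.
by rewrite -[a *: x]addr0 ipDZl ip0l addr0.
Qed.

Lemma ipZr a x z : ip z (a *: x) = a * ip z x.
Proof. by rewrite ipC ipZl ipC. Qed.

Lemma ipDl x y z : ip (x + y) z = ip x z + ip y z.
Proof. by rewrite -[x]scale1r ipDZl mul1r scale1r. Qed.

Lemma ipDr x y z : ip z (x + y) = ip z x + ip z y.
Proof. by rewrite ipC ipDl ipC [ip y z]ipC. Qed.

Lemma ipNr x z : ip z (- x) = - ip z x.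
Proof. by rewrite -scaleN1r ipZr mulN1r. Qed.

Lemma ipBr x y z : ip z (x - y) = ip z x - ip z y.
Proof. by rewrite ipDr ipNr. Qed.

Lemma normD_sqr a b : `|a + b| ^+ 2 = `|a| ^+ 2 + 2 * ip a b + `|b| ^+ 2.
Proof. by rewrite -!ipxx ipDl !ipDr [ip b a]ipC; ring. Qed.

Lemma normB_sqr a b : `|a - b| ^+ 2 = `|a| ^+ 2 - 2 * ip a b + `|b| ^+ 2.
Proof. by rewrite normD_sqr ipNr normrN mulrN. Qed.

Lemma P2_gapE (g h : R) (x y u v : H) :
  g^-1 * (`|x - v| ^+ 2 - `|x - u| ^+ 2 - `|u - v| ^+ 2)
  - h^-1 * (`|u - v| ^+ 2 + `|y - v| ^+ 2 - `|y - u| ^+ 2)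
  = 2 * ip (u - v) (g^-1 *: (x - u) - h^-1 *: (y - v)).
Proof.
have -> : x - v = (x - u) + (u - v) by rewrite addrA subrK.
have -> : y - u = (y - v) - (u - v) by rewrite opprB addrA subrK.
rewrite ipBr !ipZr (ipC (u - v)) (ipC (u - v)).
by rewrite (normD_sqr (x - u)) (normB_sqr (y - v)); ring.
Qed.

Lemma P2_ineq_iff_ip_ge0 (g h : R) (x y u v : H) :
  (h^-1 * (`|u - v| ^+ 2 + `|y - v| ^+ 2 - `|y - u| ^+ 2)
   <= g^-1 * (`|x - v| ^+ 2 - `|x - u| ^+ 2 - `|u - v| ^+ 2))
  = (0 <= ip (u - v) (g^-1 *: (x - u) - h^-1 *: (y - v))).
Proof. by rewrite -subr_ge0 P2_gapE pmulr_rge0. Qed.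

Lemma norm_le_normDZ_iff_ip_ge0 (a w : H) (d : R) : 0 < d ->
  (forall c : R, 0 <= c <= d -> `|a| <= `|a + c *: w|) <-> 0 <= ip a w.
Proof.
move=> d_gt0; set p := ip a w; set q := `|w| ^+ 2.
have q_ge0 : 0 <= q by exact: sqr_ge0.
have normDZ_sqr c : `|a + c *: w| ^+ 2 = `|a| ^+ 2 + c * (2 * p + c * q).
  by rewrite normD_sqr ipZr -[`|c *: w| ^+ 2]ipxx ipZl ipZr ipxx -/p -/q; ring.
have norm_leE c : (`|a| <= `|a + c *: w|) = (0 <= c * (2 * p + c * q)).
  by rewrite -ler_sqr ?nnegrE // normDZ_sqr lerDl.
split=> [ray | p_ge0 c /andP[c_ge0 _]]; last by rewrite norm_leE; nra.
rewrite leNgt; apply/negP => p_lt0.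
(* c <= -p / (q + 1) makes c q <= -p, hence 2 p + c q < 0 *)
pose c := Num.min d (- p / (q + 1)).
have c_gt0 : 0 < c by rewrite lt_min d_gt0 divr_gt0 // ?oppr_gt0; lra.
have c_le_d : c <= d by rewrite ge_min lexx.
have cq_le : c * q <= - p.
  have c_le : c <= - p / (q + 1) by rewrite ge_min lexx orbT.
  apply: (le_trans (ler_wpM2r q_ge0 c_le)).
  rewrite mulrAC ler_pdivrMr; nra.
have := ray c; rewrite (ltW c_gt0) c_le_d norm_leE pmulr_rge0 //; lra.
Qed.

Lemma averaged_nonexpansive_iff_ip_ge0 (g h : R) (x y u v : H) :
  0 < g -> 0 < h ->
  (forall a b : R, 0 <= a <= 1 -> 0 <= b <= 1 -> (1 - a) * g = (1 - b) * h ->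
     `|u - v| <= `|((1 - a) *: x + a *: u) - ((1 - b) *: y + b *: v)|)
  <-> 0 <= ip (u - v) (g^-1 *: (x - u) - h^-1 *: (y - v)).
Proof.
move=> g_gt0 h_gt0.
have [g0 h0] : g != 0 /\ h != 0 by rewrite !gt_eqF.
have min_gt0 : 0 < Num.min g h by rewrite lt_min g_gt0 h_gt0.
apply: iff_trans (norm_le_normDZ_iff_ip_ge0 _ _ _ min_gt0).
split=> [fne c /andP[c_ge0] | ray a b /andP[a_ge0 a_le1] /andP[b_ge0 _] e].
- rewrite le_min => /andP[c_le_g c_le_h].
  have weights (k : R) : 0 < k -> c <= k ->
      0 <= 1 - c / k <= 1 /\ (1 - (1 - c / k)) * k = c.
    move=> k_gt0 c_le_k; rewrite subKr divfK ?gt_eqF // gerBl.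
    by rewrite subr_ge0 ler_pdivrMr // mul1r c_le_k divr_ge0 // ltW.
  have [g_bounds g_eq] := weights g g_gt0 c_le_g.
  have [h_bounds h_eq] := weights h h_gt0 c_le_h.
  rewrite -(averaged_diffE x y u v g0 h0 g_eq h_eq).
  by apply: fne => //; rewrite g_eq h_eq.
- rewrite (averaged_diffE x y u v g0 h0 erefl (esym e)); apply: ray.
  rewrite mulr_ge0 ?subr_ge0 ?(ltW g_gt0) // le_min {2}e.
  by rewrite ler_piMl 1?ler_piMl ?gerBl ?(ltW g_gt0) ?(ltW h_gt0).
Qed.

End InnerProduct.

Theorem proposition3p14 (R : realType) (H : completeNormedModType R)
  (ip : H -> H -> R) (hip : is_inner_product ip)
  (T : nat -> H -> H) (gamma : nat -> R) (hgamma : forall n, 0 < gamma n) :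
  jointly_P2 T gamma <-> jointly_firmly_nonexpansive T gamma.
Proof.
have P2E n m x y := P2_ineq_iff_ip_ge0 hip (gamma n) (gamma m) x y (T n x) (T m y).
have FNE n m x y := averaged_nonexpansive_iff_ip_ge0 hip _ _ x y (T n x) (T m y)
  (hgamma n) (hgamma m).
split=> hT n m x y; first by apply/FNE; rewrite -P2E; apply: hT.
by rewrite P2E; apply/FNE; apply: hT.
Qed.
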